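(* Let $n\ge 5$, $k\in\{2,\dots,n-2\}$, and let $P,Q$ be generic planar $n$-gons such that $Q$ is inscribed in $P$ and $T_k(Q)$ is inscribed in $T_k(P)$. Then $T_k^2(Q)$ is inscribed in $T_k^2(P)$, and consequently $T_k^m(Q)$ is inscribed in $T_k^m(P)$ for every $m\ge 1$.
   Context: For an $n$-gon $P=(P_i)_{i\in\mathbb Z/n}$ in the projective plane and $k\in\{2,\dots,n-2\}$, the $k$-diagonal pentagram map is $T_k(P)=P'$ with $P'_i=P_iP_{i+k}\cap P_{i+1}P_{i+k+1}$ (here $XY$ is the line through $X,Y$). For $k=2$ this is Schwartz's pentagram map. A polygon $Q$ with the same number of vertices as $P$ is inscribed in $P$ if $Q_i$ lies on the line $P_iP_{i+1}$ for all $i$. ''Generic'' means that all iterates considered are well defined. *)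

(* Points of the real projective plane RP^2 are represented
   by homogeneous coordinates (nonzero vectors of R^3, up to scaling).
   The line through two distinct points X,Y is (represented by) the cross
   product X x Y, and the intersection of two distinct lines is again their
   cross product.  A point X lies on the line L iff X . L = 0. *)
From mathcomp Require Import all_boot all_algebra.
From mathcomp Require Import reals.

Set Implicit Arguments.
Unset Strict Implicit.
Unset Printing Implicit Defensive.
Import GRing.Theory Num.Theory.
Local Open Scope ring_scope.

Section Proj.
Variable R : realType.

Definition hpt := (R * R * R)%type.

Definition hx (u : hpt) : R := u.1.1.
Definition hy (u : hpt) : R := u.1.2.
Definition hz (u : hpt) : R := u.2.

Definition hzero : hpt := (0, 0, 0).

Definition cross (u v : hpt) : hpt :=
  (hy u * hz v - hz u * hy v,
   hz u * hx v - hx u * hz v,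
   hx u * hy v - hy u * hx v).

Definition dot (u v : hpt) : R := hx u * hx v + hy u * hy v + hz u * hz v.

(* An n-gon is an n-periodic sequence of points, indices taken in Z/n. *)
Definition polygon := nat -> hpt.
Definition periodic (n : nat) (P : polygon) : Prop := forall i, P (i + n)%N = P i.

Definition Tk (k : nat) (P : polygon) : polygon :=
  fun i => cross (cross (P i) (P (i + k)%N)) (cross (P i.+1) (P (i + k).+1)).

Definition inscribed (Q P : polygon) : Prop :=
  forall i, dot (Q i) (cross (P i) (P i.+1)) = 0.

(* genericity: every iterate T_k^m(P) consists of well-defined points, and all
   lines P_iP_{i+1}, P_iP_{i+k} used (for inscription and for T_k) are
   well-defined (their two points are distinct).  Well-definedness of the
   vertices of T_k^(m+1)(P) (the intersection of two distinct lines) is the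
   first clause at m+1. *)
Definition generic (k : nat) (P : polygon) : Prop :=
  forall (m i : nat),
    [/\ iter m (Tk k) P i != hzero,
        cross (iter m (Tk k) P i) (iter m (Tk k) P i.+1) != hzero &
        cross (iter m (Tk k) P i) (iter m (Tk k) P (i + k)%N) != hzero].

End Proj.

(* The side T_k(P)_j T_k(P)_{j+1} is the diagonal P_{j+1} P_{j+k+1}, so T_k(Q)
   is inscribed in T_k(P) iff every T_k(Q)_j lies on that diagonal.  Then
   T_k(Q)_i, T_k(Q)_{i+1}, T_k(P)_{i+1} and T_k(Q)_{i+k}, T_k(Q)_{i+k+1},
   T_k(P)_{i+k+1} are the vertices of two triangles whose sides are diagonals
   of P and Q; corresponding sides meet in Q_{i+k+1}, P_{i+k+1}, P_{i+k+2},
   which are collinear because Q is inscribed in P.  By Desargues' theorem the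
   triangles are in perspective from a point, i.e. T_k^2(Q)_i lies on the side
   T_k(P)_{i+1} T_k(P)_{i+k+1} of T_k^2(P). *)

From mathcomp Require Import all_boot all_algebra.
From mathcomp Require Import reals.
From mathcomp Require Import ring lra.

Set Implicit Arguments.
Unset Strict Implicit.
Unset Printing Implicit Defensive.
Import GRing.Theory Num.Theory.
Local Open Scope ring_scope.

Section Incidence.
Variable R : realType.
Implicit Types (s t : R) (u v w x y z a b c d e f l m : hpt R).

Definition hscale s v : hpt R := (s * hx v, s * hy v, s * hz v).
Definition det3 x y z := dot x (cross y z).

Ltac hpt_ring :=
  repeat match goal with v : hpt _ |- _ =>
    let p := fresh "p" in let q := fresh "q" in let r := fresh "r" in
    destruct v as [[p q] r] end;
  rewrite /det3 /hscale /dot /cross /hzero /hx /hy /hz /=;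
  first [ring | congr (_, _, _); ring].

Lemma dotC x y : dot x y = dot y x. Proof. hpt_ring. Qed.
Lemma dot_crossl x y : dot (cross x y) x = 0. Proof. hpt_ring. Qed.
Lemma dot_crossr x y : dot (cross x y) y = 0. Proof. hpt_ring. Qed.
Lemma dot_cross x y z : dot (cross x y) z = det3 x y z. Proof. hpt_ring. Qed.
Lemma dotZ s x y : dot x (hscale s y) = s * dot x y. Proof. hpt_ring. Qed.
Lemma dotZl s x y : dot (hscale s x) y = s * dot x y. Proof. hpt_ring. Qed.
Lemma crossZl s x y : cross (hscale s x) y = hscale s (cross x y). Proof. hpt_ring. Qed.
Lemma crossZr s x y : cross x (hscale s y) = hscale s (cross x y). Proof. hpt_ring. Qed.
Lemma cross0r x : cross x (hzero R) = hzero R. Proof. hpt_ring. Qed.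
Lemma cross0l x : cross (hzero R) x = hzero R. Proof. hpt_ring. Qed.
Lemma crossC x y : cross y x = hscale (-1) (cross x y). Proof. hpt_ring. Qed.
Lemma scale0 x : hscale 0 x = hzero R. Proof. hpt_ring. Qed.
Lemma scaler0 s : hscale s (hzero R) = hzero R. Proof. hpt_ring. Qed.
Lemma det3Zl s x y z : det3 (hscale s x) y z = s * det3 x y z. Proof. hpt_ring. Qed.
Lemma det3Zm s x y z : det3 x (hscale s y) z = s * det3 x y z. Proof. hpt_ring. Qed.
Lemma det3Zr s x y z : det3 x y (hscale s z) = s * det3 x y z. Proof. hpt_ring. Qed.
Lemma det3_rot x y z : det3 y z x = det3 x y z. Proof. hpt_ring. Qed.
Lemma det3_swap12 x y z : det3 y x z = - det3 x y z. Proof. hpt_ring. Qed.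
Lemma det3_swap23 x y z : det3 x z y = - det3 x y z. Proof. hpt_ring. Qed.
Lemma det3xyy x y : det3 x y y = 0. Proof. hpt_ring. Qed.

Lemma cross_cross_common x y z : cross (cross x y) (cross y z) = hscale (det3 x y z) y.
Proof. hpt_ring. Qed.

Lemma det3_cross_common u v w z :
  det3 (cross u v) (cross u w) z = det3 u v w * dot u z.
Proof. hpt_ring. Qed.

Lemma desargues_identity p1 p2 p3 q1 q2 q3 :
  det3 (cross (cross p1 p2) (cross q1 q2)) (cross (cross p2 p3) (cross q2 q3))
       (cross (cross p1 p3) (cross q1 q3))
  = det3 p1 p2 p3 * det3 q1 q2 q3 * det3 (cross p1 q1) (cross p2 q2) (cross p3 q3).
Proof. hpt_ring. Qed.

Lemma scale_neq0 s v : hscale s v != hzero R -> s != 0.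
Proof. by apply: contra => /eqP ->; rewrite scale0. Qed.

Lemma cross_neq0l x y : cross x y != hzero R -> x != hzero R.
Proof. by apply: contra => /eqP ->; rewrite cross0l. Qed.

Lemma cross_neq0r x y : cross x y != hzero R -> y != hzero R.
Proof. by apply: contra => /eqP ->; rewrite cross0r. Qed.

Lemma crossC_eq0 x y : cross x y = hzero R -> cross y x = hzero R.
Proof. by move=> xy0; rewrite crossC xy0 scaler0. Qed.

Lemma crossC_neq0 x y : cross x y != hzero R -> cross y x != hzero R.
Proof. by apply: contra => /eqP /crossC_eq0 ->. Qed.

Lemma dot_self_neq0 v : v != hzero R -> dot v v != 0.
Proof.
case: v => [[p q] r]; rewrite /dot /hx /hy /hz /=; apply: contra => /eqP v0.
have [-> ->] : p = 0 /\ q = 0 by split; nra.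
by have -> : r = 0 by nra.
Qed.

Lemma cross_crossE l m x : cross (cross l m) x =
  (hx m * dot l x - hx l * dot m x,
   hy m * dot l x - hy l * dot m x,
   hz m * dot l x - hz l * dot m x).
Proof. hpt_ring. Qed.

Lemma hptE x : x = (hx x, hy x, hz x).
Proof. by case: x => [[]]. Qed.

Lemma cross_eq0_scale x w : cross x w = hzero R -> w != hzero R ->
  exists s, x = hscale s w.
Proof.
move=> xw0 w0; have ww0 := dot_self_neq0 w0.
have := cross_crossE w x w; rewrite (crossC x w) xw0 scaler0 cross0l => -[h1 h2 h3].
exists (dot x w / dot w w); rewrite [LHS]hptE /hscale.
by congr (_, _, _); apply: (mulIf ww0); rewrite mulrAC divfK //; lra.
Qed.

Lemma perp2_scale x l m : dot x l = 0 -> dot x m = 0 -> cross l m != hzero R ->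
  exists s, x = hscale s (cross l m).
Proof.
move=> xl xm lm0; apply: cross_eq0_scale lm0.
rewrite (crossC (cross l m)) cross_crossE (dotC l) (dotC m) xl xm.
by rewrite /hscale /hzero !mulr0 subrr mulr0.
Qed.

Lemma perp3_det3 x y z c : dot x c = 0 -> dot y c = 0 -> dot z c = 0 ->
  c != hzero R -> det3 x y z = 0.
Proof.
move=> xc yc zc c0.
have : det3 x y z * dot c c = 0.
  have -> : det3 x y z * dot c c =
    dot x c * det3 c y z + dot y c * det3 c z x + dot z c * det3 c x y by hpt_ring.
  by rewrite xc yc zc !mul0r !addr0.
by move/eqP; rewrite mulf_eq0 (negbTE (dot_self_neq0 c0)) orbF => /eqP.
Qed.

(* The lines [a], [b], [e] and [c], [d], [f] form two triangles with vertices
   [X1 = a e], [X2 = b e], [a b] and [X3 = c f], [X4 = d f], [c d], whose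
   corresponding sides meet in the collinear points [e f], [a c], [b d]. *)
Definition desargues_config X1 X2 X3 X4 a b c d e f : Prop :=
  [/\ [/\ dot X1 a = 0, dot X1 e = 0, dot X2 b = 0 & dot X2 e = 0],
      [/\ dot X3 c = 0, dot X3 f = 0, dot X4 d = 0 & dot X4 f = 0],
      [/\ cross a b != hzero R, cross c d != hzero R, e != hzero R & f != hzero R] &
      det3 (cross e f) (cross a c) (cross b d) = 0].

Lemma desargues_config_swap_sides X1 X2 X3 X4 a b c d e f :
  desargues_config X1 X2 X3 X4 a b c d e f ->
  desargues_config X2 X1 X4 X3 b a d c e f.
Proof.
case=> [[? ? ? ?] [? ? ? ?] [? ? ? ?] col]; split; [by split.. | |].
- by split=> //; exact: crossC_neq0.
- by rewrite det3_swap23 col oppr0.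
Qed.

Lemma desargues_config_swap_triangles X1 X2 X3 X4 a b c d e f :
  desargues_config X1 X2 X3 X4 a b c d e f ->
  desargues_config X3 X4 X1 X2 c d a b f e.
Proof.
case=> [? ? [? ? ? ?] col]; split=> //.
have -> : det3 (cross f e) (cross c a) (cross d b) =
          - det3 (cross e f) (cross a c) (cross b d) by hpt_ring.
by rewrite col oppr0.
Qed.

(* If [a = e] then [X2 = a b], and the collinearity makes [a], [c], [f] or
   [a], [b], [d] concurrent; either way two of the three lines share a point. *)
Lemma desargues_parallel X1 X2 X3 X4 a b c d e f :
  desargues_config X1 X2 X3 X4 a b c d e f -> cross a e = hzero R ->
  det3 (cross X1 X3) (cross X2 X4) (cross (cross a b) (cross c d)) = 0.
Proof.
case=> [[X1a X1e X2b X2e] [X3c X3f X4d X4f] [ab0 cd0 e0 f0] col] ae0.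
have a0 := cross_neq0l ab0.
have [l eE] := cross_eq0_scale (crossC_eq0 ae0) a0.
have l0 : l != 0 by apply: (@scale_neq0 _ a); rewrite -eE.
have X2a : dot X2 a = 0.
  by apply: (mulfI l0); rewrite mulr0 -dotZ -eE.
have [s X2E] := perp2_scale X2a X2b ab0.
have {col} : det3 a f c * det3 a b d = 0.
  by apply: (mulfI l0); rewrite mulr0 -col eE crossZl det3Zl det3_cross_common.
rewrite X2E crossZl det3Zm -(det3_rot (cross X1 X3)) det3_cross_common.
move/eqP; rewrite mulf_eq0 => /orP[/eqP afc | /eqP abd].
- case: (eqVneq (cross c f) (hzero R)) => [cf0 | cf0].
  + have [m cE] := cross_eq0_scale cf0 f0.
    have X4c : dot X4 c = 0 by rewrite cE dotZ X4f mulr0.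
    have [t X4E] := perp2_scale X4c X4d cd0.
    by rewrite X4E det3Zm det3xyy !(mul0r, mulr0).
  have [t X3E] := perp2_scale X3c X3f cf0.
  have X3a : dot X3 a = 0.
    by rewrite X3E dotZl dot_cross det3_rot det3_swap23 afc oppr0 mulr0.
  have Ya : dot (cross a b) a = 0 := dot_crossl a b.
  by move: (perp3_det3 Ya X1a X3a a0); rewrite /det3 => ->; rewrite !mulr0.
- have Yd : dot (cross a b) d = 0 by rewrite dot_cross abd.
  have Zd : dot (cross c d) d = 0 := dot_crossr c d.
  by rewrite (perp3_det3 Yd X4d Zd (cross_neq0r cd0)) !(mul0r, mulr0).
Qed.

Lemma desargues X1 X2 X3 X4 a b c d e f :
  desargues_config X1 X2 X3 X4 a b c d e f ->
  det3 (cross X1 X3) (cross X2 X4) (cross (cross a b) (cross c d)) = 0.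
Proof.
move=> cfg; have cfg' := desargues_config_swap_triangles cfg.
case: (eqVneq (cross a e) (hzero R)) => [ae0 | ae0].
  exact: desargues_parallel cfg ae0.
case: (eqVneq (cross e b) (hzero R)) => [eb0 | eb0].
  have := desargues_parallel (desargues_config_swap_sides cfg) (crossC_eq0 eb0).
  have -> : det3 (cross X2 X4) (cross X1 X3) (cross (cross b a) (cross d c)) =
    - det3 (cross X1 X3) (cross X2 X4) (cross (cross a b) (cross c d)) by hpt_ring.
  by move/eqP; rewrite oppr_eq0 => /eqP.
case: (eqVneq (cross c f) (hzero R)) => [cf0 | cf0].
  have := desargues_parallel cfg' cf0.
  have -> : det3 (cross X3 X1) (cross X4 X2) (cross (cross c d) (cross a b)) =
    - det3 (cross X1 X3) (cross X2 X4) (cross (cross a b) (cross c d)) by hpt_ring.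
  by move/eqP; rewrite oppr_eq0 => /eqP.
case: (eqVneq (cross f d) (hzero R)) => [fd0 | fd0].
  have := desargues_parallel (desargues_config_swap_sides cfg') (crossC_eq0 fd0).
  have -> : det3 (cross X4 X2) (cross X3 X1) (cross (cross d c) (cross b a)) =
    det3 (cross X1 X3) (cross X2 X4) (cross (cross a b) (cross c d)) by hpt_ring.
  by [].
case: cfg => [[X1a X1e X2b X2e] [X3c X3f X4d X4f] _ col].
have [s1 ->] := perp2_scale X1a X1e ae0.
have [s2 ->] := perp2_scale X2e X2b eb0.
have [s3 ->] := perp2_scale X3c X3f cf0.
have [s4 ->] := perp2_scale X4f X4d fd0.
rewrite !crossZl !crossZr !det3Zl !det3Zm desargues_identity (det3_swap12 (cross e f)) col.
by rewrite oppr0 !mulr0.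
Qed.

End Incidence.

Section Pentagram.
Variables (R : realType) (k : nat).
Implicit Types P Q : polygon R.

Definition diag P j : hpt R := cross (P j) (P (j + k)%N).

Lemma Tk_diag P j : Tk k P j = cross (diag P j) (diag P j.+1).
Proof. by rewrite /Tk /diag addSn. Qed.

Lemma inscribed_TkP P Q :
  (forall j, cross (Tk k P j) (Tk k P j.+1) != hzero R) ->
  inscribed Q (Tk k P) <-> forall j, dot (Q j) (diag P j.+1) = 0.
Proof.
move=> TP0.
have sideE j : cross (Tk k P j) (Tk k P j.+1) =
    hscale (det3 (diag P j) (diag P j.+1) (diag P j.+2)) (diag P j.+1).
  by rewrite !Tk_diag cross_cross_common.
split=> QP j; have := TP0 j; rewrite sideE => /scale_neq0 s0.
- by apply: (mulfI s0); rewrite mulr0 -dotZ -sideE; exact: QP.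
- by rewrite dotZ QP mulr0.
Qed.

Lemma diag_incidence_Tk P Q :
  (forall j, Tk k P j != hzero R) -> (forall j, diag Q j != hzero R) ->
  inscribed Q P -> (forall j, dot (Tk k Q j) (diag P j.+1) = 0) ->
  forall i, dot (Tk k (Tk k Q) i) (diag (Tk k P) i.+1) = 0.
Proof.
move=> TP0 DQ0 QP TQP i.
have QP' j : det3 (Q j) (P j) (P j.+1) = 0 := QP j.
rewrite [Tk k (Tk k Q) i]/Tk dot_cross [diag (Tk k P) _]/diag addSn.
rewrite (Tk_diag P i.+1) (Tk_diag P (i + k).+1).
apply: (@desargues _ _ (Tk k Q i.+1) _ (Tk k Q (i + k).+1) _ _ _ _
  (diag Q i.+1) (diag Q (i + k).+1)); split; try split.
all: rewrite ?Tk_diag ?dot_crossl ?dot_crossr -?Tk_diag //.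
by rewrite /diag !addSn !cross_cross_common det3Zl det3Zm det3Zr QP' !mulr0.
Qed.

Lemma inscribed_Tk2 P Q : generic k P -> generic k Q ->
  inscribed Q P -> inscribed (Tk k Q) (Tk k P) ->
  inscribed (Tk k (Tk k Q)) (Tk k (Tk k P)).
Proof.
move=> gP gQ QP TQP.
have TP0 j : Tk k P j != hzero R by case: (gP 1%N j).
have DQ0 j : diag Q j != hzero R by case: (gQ 0%N j).
have TP1 j : cross (Tk k P j) (Tk k P j.+1) != hzero R by case: (gP 1%N j).
have TP2 j : cross (Tk k (Tk k P) j) (Tk k (Tk k P) j.+1) != hzero R.
  by case: (gP 2%N j).
apply/(inscribed_TkP _ TP2)/diag_incidence_Tk => //.
exact/(inscribed_TkP _ TP1).
Qed.

Lemma generic_iter m P : generic k P -> generic k (iter m (Tk k) P).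
Proof. by move=> gP m' j; rewrite -iterD; exact: gP. Qed.

End Pentagram.

Theorem theorem6 (R : realType) (n k : nat) (P Q : polygon R) :
  (5 <= n)%N -> (2 <= k)%N -> (k <= n - 2)%N ->
  periodic n P -> periodic n Q ->
  generic k P -> generic k Q ->
  inscribed Q P -> inscribed (Tk k Q) (Tk k P) ->
  inscribed (iter 2 (Tk k) Q) (iter 2 (Tk k) P) /\
  (forall m : nat, (1 <= m)%N -> inscribed (iter m (Tk k) Q) (iter m (Tk k) P)).
Proof.
move=> _ _ _ _ _ gP gQ QP TQP.
have step m : inscribed (iter m (Tk k) Q) (iter m (Tk k) P) /\
              inscribed (iter m.+1 (Tk k) Q) (iter m.+1 (Tk k) P).
  elim: m => [// | m [IH0 IH1]]; split=> //.
  by apply: inscribed_Tk2 => //; exact: generic_iter.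
split; first exact: (step 1%N).2.
by case=> [// | m] _; exact: (step m).2.
Qed.
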